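(* Let $k$ be an algebraically closed field of characteristic $p>0$. Let $e_1\ge e_2$ be positive integers with $e=e_1+e_2$, $p\nmid(e-1)(e_1-1)(e_2-1)$, and let $pw$ be the smallest multiple of $p$ that is $\ge e_1$. Suppose $\lfloor\frac{e-1}{p}\rfloor>\lfloor\frac{e_1-1}{p}\rfloor+\lfloor\frac{e_2-1}{p}\rfloor$. Then there exists a rational function $G(x,t)\in\operatorname{Frac}(k[x,t])$ whose partial fraction decomposition in $k(t)(x)$ has the form $$G(x,t)=\sum_{i=1}^{e_1-1}\frac{a_i}{x^i}+\frac{a_{pw}}{x^{pw}}+\sum_{j=1}^{e_2-1}\frac{b_j}{(x-t)^j}$$ with all $a_i,b_j\in k(t)$ and $a_{pw},a_{e_1-1},b_{e_2-1}\neq0$, such that $G(x,0)\in\operatorname{Frac}(k[x])$ has exactly one pole, of order $e-1$, at $x=0$. *)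

From HB Require Import structures.
From mathcomp Require Import all_boot all_order all_algebra all_field.
From mathcomp Require Import fraction.
Set Implicit Arguments. Unset Strict Implicit. Unset Printing Implicit Defensive.
Import Order.TTheory GRing.Theory Num.Theory.
Local Open Scope ring_scope.
Notation "x %:F" := (@FracField.tofrac _ x) : ring_scope.

Definition kt (k : fieldType) := {fraction {poly k}}.
(* k(t)(x) = Frac(k[x,t]) : rational functions in x over k(t) *)
Definition kxt (k : fieldType) := {fraction {poly (kt k)}}.
Definition kx (k : fieldType) := {fraction {poly k}}.

Definition tvar (k : fieldType) : kt k := ('X : {poly k})%:F.
Definition xvar (k : fieldType) : kxt k := ('X : {poly (kt k)})%:F.
Definition cst (k : fieldType) (a : kt k) : kxt k := (a%:P)%:F.

(* k[t][x] = k[x,t] : outer variable x, coefficients in k[t] *)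
Definition embxt (k : fieldType) (P : {poly {poly k}}) : kxt k :=
  (map_poly (fun c : {poly k} => (c%:F : kt k)) P)%:F.

Definition spec0 (k : fieldType) (P : {poly {poly k}}) : {poly k} :=
  map_poly (fun c : {poly k} => c.[0]) P.

(* G(x,0) is defined and equals h: G = P/Q with P, Q in k[x,t], Q(x,0) <> 0,
   and h = P(x,0)/Q(x,0).  (Standard specialization; independent of choice.) *)
Definition specializes_to (k : fieldType) (G : kxt k) (h : kx k) : Prop :=
  exists P Q : {poly {poly k}},
    [/\ spec0 Q != 0, G * embxt Q = embxt P &
        h * ((spec0 Q)%:F : kx k) = ((spec0 P)%:F : kx k)].

Definition Gform (k : fieldType) (e1 e2 pw : nat) (a : nat -> kt k) (apw : kt k)
    (b : nat -> kt k) : kxt k :=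
  \sum_(1 <= i < e1) cst (a i) / xvar k ^+ i
  + cst apw / xvar k ^+ pw
  + \sum_(1 <= j < e2) cst (b j) / (xvar k - cst (tvar k)) ^+ j.

From HB Require Import structures.
From mathcomp Require Import all_boot all_order all_algebra all_field.
From mathcomp Require Import fraction.
From mathcomp Require Import zify ring.
Set Implicit Arguments. Unset Strict Implicit. Unset Printing Implicit Defensive.
Import Order.TTheory GRing.Theory Num.Theory.
Local Open Scope ring_scope.

(* Write e1 = m + 1, e2 = n + 1 and pw = m + q + 1.  The floor hypothesis says
   that adding m and n modulo p carries, which forces q < n mod p, so that
   C(n, q), C(n, q + 1) and C(n - 1, q) are prime to p.  In y = x / t let N be
   the truncation of (1 - y)^n to degree q.  As 1 - y is invertible modulo
   y^pw, N = U (1 - y)^n + y^pw V with deg U < pw, deg V < n, and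
   U = 1 - ((1 - y)^n)_(q+1) y^(q+1) modulo y^(q+2).  Dividing by y^pw (1 - y)^n
   gives the partial fractions of G = t^q N(x/t) / (x^pw (t - x)^n), suitably
   scaled: a_pw comes from U_0 = 1, a_(e1-1) from U_(q+1) and b_(e2-1) from
   V(1) = N(1) = +-C(n - 1, q).  At t = 0 the numerator t^q N(x/t) becomes
   N_q x^q, so G(x, 0) = +-C(n, q) / x^(m+n+1). *)

Lemma prime_ndvd_ffact p n c : prime p -> (c <= n %% p)%N -> ~~ (p %| n ^_ c)%N.
Proof.
move=> p_pr; have p_gt0 := prime_gt0 p_pr.
elim: c => [|c IHc] c_le; first by rewrite ffactn0 dvdn1 neq_ltn prime_gt1 ?orbT.
rewrite ffactnSr Euclid_dvdM // negb_or IHc ?(ltnW c_le) //=.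
have lt_mod := ltn_pmod n p_gt0.
rewrite {1}(divn_eq n p) -addnBA ?(ltnW c_le) // dvdn_addr ?dvdn_mull //.
by rewrite gtnNdvd ?subn_gt0 // (leq_ltn_trans (leq_subr _ _)).
Qed.

Lemma prime_ndvd_binomial p n c : prime p -> (c <= n %% p)%N -> ~~ (p %| 'C(n, c))%N.
Proof.
move=> p_pr c_le; move: (prime_ndvd_ffact p_pr c_le); apply: contra.
by rewrite -bin_ffact; apply: dvdn_mulr.
Qed.

Lemma carry_modnD p m n : (0 < p)%N -> ~~ (p %| (m + n).+1)%N ->
  (m %/ p + n %/ p < (m + n).+1 %/ p)%N -> (p <= m %% p + n %% p)%N.
Proof.
move=> p_gt0 ndvd lt_div.
have eq_mn : ((m + n).+1 = (m %/ p + n %/ p) * p + (m %% p + n %% p).+1)%N.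
  by rewrite mulnDl {1}(divn_eq m p) {1}(divn_eq n p); lia.
move: lt_div ndvd; rewrite eq_mn divnMDl // -[X in (X < _)%N]addn0 ltn_add2l.
rewrite divn_gt0 // leq_eqVlt => /orP[/eqP <- | //].
by rewrite -mulSnr dvdn_mull.
Qed.

Lemma least_multiple_gt p m pw : (0 < p)%N -> (p %| pw)%N -> (m < pw)%N ->
  (forall j, (p %| j)%N -> (m < j)%N -> (pw <= j)%N) -> pw = (m + (p - m %% p))%N.
Proof.
move=> p_gt0 /dvdnP[c ->] m_lt min_pw.
have lt_mod := ltn_pmod m p_gt0.
have m_eq : (m + (p - m %% p) = (m %/ p).+1 * p)%N.
  by rewrite mulSn {1}(divn_eq m p); lia.
rewrite m_eq; apply/eqP; rewrite eqn_leq min_pw ?dvdn_mull //; last by rewrite -m_eq; lia.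
rewrite leq_mul2r; apply/orP; right.
by rewrite -(ltn_pmul2r p_gt0) (leq_ltn_trans (leq_divM m p)).
Qed.

Lemma least_multiple_excess p m n pw : prime p -> ~~ (p %| (m + n).+1)%N ->
    (m %/ p + n %/ p < (m + n).+1 %/ p)%N -> (p %| pw)%N -> (m < pw)%N ->
    (forall j, (p %| j)%N -> (m < j)%N -> (pw <= j)%N) ->
  exists q, [/\ (0 < m)%N, pw = (m + q).+1 & (q < n %% p)%N].
Proof.
move=> p_pr ndvd lt_div dvd_pw lt_pw min_pw; have p_gt0 := prime_gt0 p_pr.
have carry := carry_modnD p_gt0 ndvd lt_div.
have pw_eq := least_multiple_gt p_gt0 dvd_pw lt_pw min_pw.
have := ltn_pmod m p_gt0; have := ltn_pmod n p_gt0.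
exists (p - m %% p).-1; split; try lia.
by rewrite lt0n; apply: contraTneq carry => ->; rewrite mod0n add0n -ltnNge.
Qed.

Lemma prime_ndvd_binomial_pred p n c : prime p -> (c < n %% p)%N -> ~~ (p %| 'C(n.-1, c))%N.
Proof.
move=> p_pr lt_c; apply: prime_ndvd_binomial => //; case: n lt_c => [|n]; first by rewrite mod0n.
by rewrite modnS; case: ifP.
Qed.

Section TruncatedDivision.
Variable R : comNzRingType.
Implicit Types A I F N : {poly R}.

Lemma coef_1subX_exp n l : ((1 - 'X) ^+ n : {poly R})`_l = (-1) ^+ l * 'C(n, l)%:R.
Proof.
elim: n l => [|n IHn] [|l].
- by rewrite expr0 coef1 expr0 mulr1.
- by rewrite expr0 coef1 bin0n mulr0.
- by rewrite exprSr mulrBr mulr1 coefB coefMX IHn subr0 !bin0.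
- by rewrite exprSr mulrBr mulr1 coefB coefMX /= !IHn binS natrD exprS; ring.
Qed.

Lemma sum_sign_binomial n q :
  \sum_(l < q.+1) (-1) ^+ l * 'C(n.+1, l)%:R = (-1) ^+ q * 'C(n, q)%:R :> R.
Proof.
elim: q => [|q IHq]; first by rewrite big_ord1 !bin0.
by rewrite big_ord_recr /= IHq binS natrD exprS; ring.
Qed.

Lemma exp_1subX_geometric n d :
  exists F, (1 - 'X) ^+ n * (\sum_(s < d) 'X^s) ^+ n = 1 + 'X^d * F.
Proof.
have geo : (1 - 'X) * \sum_(s < d) 'X^s = 1 - 'X^d :> {poly R}.
  by rewrite -opprB mulNr -subrX1 opprB.
exists (- \sum_(i < n) (1 - 'X^d) ^+ i); rewrite -exprMn geo.
have := subrX1 (1 - 'X^d : {poly R}) n.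
rewrite (_ : 1 - 'X^d - 1 = - 'X^d); last by ring.
by rewrite mulrN -mulNr => <-; ring.
Qed.

Lemma truncated_division A I F N d : A * I = 1 + 'X^d * F ->
  N = take_poly d (N * I) * A + 'X^d * (drop_poly d (N * I) * A - N * F).
Proof.
move=> AI; have NI := poly_take_drop d (N * I).
set U := take_poly d _ in NI *; set D := drop_poly d _ in NI *.
transitivity (A * (N * I) - 'X^d * (N * F)); first by rewrite mulrCA AI; ring.
by rewrite -NI; ring.
Qed.

Lemma trunc_1subX_exp_decomposition m n q : (0 < m)%N ->
  exists U V, [/\ take_poly q.+1 ((1 - 'X) ^+ n) = U * (1 - 'X) ^+ n + 'X^((m + q).+1) * V,
    (size U <= (m + q).+1)%N, (size V <= n)%N, take_poly q.+1 U = 1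
    & U`_q.+1 = - ((1 - 'X) ^+ n : {poly R})`_q.+1].
Proof.
move=> m_gt0; set A := (1 - 'X) ^+ n; set d := (m + q).+1; set N := take_poly q.+1 A.
have [F] := exp_1subX_geometric n d; rewrite -/A.
set I := (\sum_(s < d) 'X^s) ^+ n => AI.
have NE := truncated_division N AI.
set U := take_poly d _ in NE; set V := (_ - _) in NE.
set D := drop_poly q.+1 A.
have NI : N * I = 1 + 'X^d * F - 'X^(q.+1) * (D * I).
  have AE : N = A - D * 'X^(q.+1) by rewrite -(poly_take_drop q.+1 A) addrK.
  by rewrite AE mulrBl AI; ring.
have coefU l : (l < d)%N -> U`_l = (l == 0)%:R - ('X^(q.+1) * (D * I))`_l.
  move=> lt_ld; rewrite coef_take_poly lt_ld NI coefB coefD coef1.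
  by rewrite [('X^d * _)`_l]coefXnM lt_ld addr0.
exists U, V; split => //.
- exact: size_take_poly.
- have -> : V = drop_poly d (N - U * A).
    by rewrite {1}NE addrAC subrr add0r mulrC drop_polyMXn_id.
  rewrite size_drop_poly leq_subLR.
  apply: leq_trans (size_polyD _ _) _; rewrite size_polyN geq_max; apply/andP; split.
    by rewrite (leq_trans (size_take_poly _ _)) // /d; lia.
  have size_A : (size A <= n.+1)%N.
    apply: leq_trans (size_poly_exp_leq _ _) _.
    by rewrite -opprB size_polyN -polyC1 size_XsubC mul1n.
  apply: leq_trans (size_polyMleq U A) _.
  have size_U : (size U <= d)%N := size_take_poly _ _.
  by move: (size U) (size A) size_U size_A => a b; lia.
- apply/polyP => l; rewrite coef_take_poly coef1.
  case: ltnP => [lt_lq | le_ql]; last by case: l le_ql.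
  by rewrite coefU ?coefXnM ?lt_lq ?subr0 // /d; lia.
- rewrite coefU; last lia.
  rewrite coefXnM ltnn subnn coef0M coef_drop_poly add0n sub0r.
  rewrite -[I`_0]horner_coef0 horner_exp horner_sum big_ord_recl /= hornerXn expr0.
  by rewrite big1 ?addr0 ?expr1n ?mulr1 // => s _; rewrite hornerXn expr0n.
Qed.

Lemma horner1_take_1subX_exp n q : (0 < n)%N ->
  (take_poly q.+1 ((1 - 'X) ^+ n) : {poly R}).[1] = (-1) ^+ q * 'C(n.-1, q)%:R.
Proof.
case: n => // n _; rewrite (horner_coef_wide _ (size_take_poly _ _)) -sum_sign_binomial.
by apply: eq_bigr => l _; rewrite expr1n mulr1 coef_take_poly ltn_ord coef_1subX_exp.
Qed.

End TruncatedDivision.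

Lemma horner_div_exp (F : fieldType) (P : {poly F}) d z : (size P <= d)%N -> z != 0 ->
  P.[z] / z ^+ d = \sum_(1 <= i < d.+1) P`_(d - i) / z ^+ i.
Proof.
move=> size_P z_neq0; rewrite (horner_coef_wide z size_P) mulr_suml.
rewrite big_add1 /= big_mkord (reindex_inj rev_ord_inj) /=.
apply: eq_bigr => i _.
have -> : z ^+ d = z ^+ (d - i.+1) * z ^+ i.+1 by rewrite -exprD subnK.
by rewrite invfM mulrA mulfK ?expf_neq0.
Qed.

Lemma horner_div_exp_split (F : fieldType) (P Q : {poly F}) m q n (z w : F) :
    (size P <= (m + q).+1)%N -> (forall l, (0 < l <= q)%N -> P`_l = 0) ->
    (size Q <= n)%N -> z != 0 -> w != 0 ->
  P.[z] / z ^+ (m + q).+1 + Q.[w] / w ^+ n =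
  \sum_(1 <= i < m.+1) P`_((m + q).+1 - i) / z ^+ i + P`_0 / z ^+ (m + q).+1
  + \sum_(1 <= j < n.+1) Q`_(n - j) / w ^+ j.
Proof.
move=> size_P P_low size_Q z_neq0 w_neq0; set d := (m + q).+1.
rewrite !horner_div_exp //; congr (_ + _).
rewrite (big_cat_nat _ (n := m.+1)) //=; last by rewrite /d; lia.
rewrite (big_nat_recr d) /=; last by rewrite /d; lia.
rewrite subnn [X in _ + (X + _)]big1_seq ?add0r // => i /andP[_].
rewrite mem_index_iota => /andP[m_lt i_lt]; rewrite P_low ?mul0r //.
by rewrite /d in i_lt *; apply/andP; split; lia.
Qed.

Lemma divrN_subr (F : fieldType) (a b : F) : b != 0 -> (a - b) / - b = 1 - a / b.
Proof. by move=> b_neq0; rewrite invrN mulrN mulrBl divff // opprB. Qed.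

Lemma one_sub_div_neq0 (F : fieldType) (a b : F) : b != 0 -> a - b != 0 -> 1 - a / b != 0.
Proof.
move=> b_neq0 ab_neq0; rewrite -(divff b_neq0) -mulrBl mulf_neq0 ?invr_eq0 //.
by rewrite -oppr_eq0 opprB.
Qed.

Section MorphedFractions.
Variables (K L : fieldType) (f : {rmorphism K -> L}).

Lemma rmorph_div_exp (a s c : K) (y : L) i :
  f (a * s ^+ i * c) / y ^+ i = f c * (f a / (y / f s) ^+ i).
Proof. by rewrite !rmorphM rmorphXn expr_div_n invf_div; ring. Qed.

Lemma rmorph_div_exp_sub (s a c : K) (y : L) j : s != 0 ->
  f (a * (- s) ^+ j * c) / (y - f s) ^+ j = f c * (f a / (1 - y / f s) ^+ j).
Proof.
move=> s_neq0; rewrite rmorph_div_exp rmorphN divrN_subr //.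
by rewrite fmorph_eq0.
Qed.

End MorphedFractions.

Lemma mulr_exp_div_exp (F : fieldType) (a X T : F) d l : T != 0 -> (l <= d)%N ->
  a * T ^+ (d - l) * X ^+ l = T ^+ d * (a * (X / T) ^+ l).
Proof.
move=> T_neq0 le_ld; rewrite expr_div_n -{2}(subnK le_ld) exprD.
by field; rewrite expf_neq0.
Qed.

Section MapPolyFractions.
Variables (R : comNzRingType) (F : fieldType) (f : {rmorphism R -> F}).

Lemma horner_map_decomposition (U V : {poly R}) n d z :
  (map_poly f (U * (1 - 'X) ^+ n + 'X^d * V)).[z]
  = (map_poly f U).[z] * (1 - z) ^+ n + z ^+ d * (map_poly f V).[z].
Proof. by rewrite rmorphD !rmorphM !rmorphXn rmorphB rmorph1 /= map_polyX !hornerE. Qed.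

Lemma horner_map_comp_1subX (W : {poly R}) z :
  (map_poly f (W \Po (1 - 'X))).[1 - z] = (map_poly f W).[z].
Proof. by rewrite map_comp_poly horner_comp rmorphB rmorph1 /= map_polyX !hornerE subKr. Qed.

Lemma partial_fractions_clear_denominators (U V : {poly R}) (X T C : F) d n e q :
    X != 0 -> T != 0 -> X - T != 0 -> C * T ^+ e = 1 -> (d + n = e + q)%N ->
  C * ((map_poly f U).[X / T] / (X / T) ^+ d
       + (map_poly f (V \Po (1 - 'X))).[1 - X / T] / (1 - X / T) ^+ n)
    * (X ^+ d * (T - X) ^+ n)
  = T ^+ q * (map_poly f (U * (1 - 'X) ^+ n + 'X^d * V)).[X / T].
Proof.
move=> X_neq0 T_neq0 XT_neq0 CT eq_exp.
rewrite horner_map_comp_1subX horner_map_decomposition.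
move: (map_poly f U).[_] (map_poly f V).[_] => A B.
have TX_neq0 : T - X != 0 by rewrite -oppr_eq0 opprB.
have -> : 1 - X / T = (T - X) / T by rewrite mulrBl divff.
have -> : T ^+ q = C * (T ^+ d * T ^+ n) by rewrite -exprD eq_exp exprD mulrA CT mul1r.
by rewrite !expr_div_n; field; rewrite ?expf_neq0.
Qed.

End MapPolyFractions.

Lemma rmorph_div_exp_eq (R : comNzRingType) (F : fieldType) (f : {rmorphism R -> F})
    (a b p y : R) e : f y != 0 -> a * b = p * y ^+ e -> f a / f y ^+ e * f b = f p.
Proof.
move=> fy_neq0 eq_ab; rewrite mulrAC -rmorphM eq_ab rmorphM rmorphXn mulfK //.
exact: expf_neq0.
Qed.

(* Rewriting between distinct concrete elements of k(t)(x) can make unification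
   compute in the fraction field, so identities there are derived from the
   generic lemmas above by apply/exact. *)
Section RationalFunctions.
Variable k : fieldType.
Local Notation x := (xvar k).
Local Notation t := (cst (tvar k)).

Definition kt_const : {rmorphism k -> kt k} := (@tofrac _ \o polyC)%FUN.
Definition cst_rmorph : {rmorphism kt k -> kxt k} := (@tofrac _ \o polyC)%FUN.
Definition kxt_const : {rmorphism k -> kxt k} := (cst_rmorph \o kt_const)%FUN.

Lemma cst_rmorphE a : cst a = cst_rmorph a. Proof. by []. Qed.

Lemma tvar_neq0 : tvar k != 0.
Proof. by rewrite tofrac_eq0 polyX_eq0. Qed.

Lemma cst_tvar_neq0 : t != 0.
Proof. by rewrite cst_rmorphE fmorph_eq0 tvar_neq0. Qed.

Lemma xvar_neq0 : x != 0.
Proof. by rewrite tofrac_eq0 polyX_eq0. Qed.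

Lemma xvar_sub_tvar_neq0 : x - t != 0.
Proof. by rewrite /cst /xvar -rmorphB tofrac_eq0 polyXsubC_eq0. Qed.

Lemma xvar_div_tvar_neq0 : x / t != 0.
Proof.
by apply: mulf_neq0; rewrite ?invr_eq0; [exact: xvar_neq0 | exact: cst_tvar_neq0].
Qed.

Lemma one_sub_xvar_div_neq0 : 1 - x / t != 0.
Proof. exact: one_sub_div_neq0 cst_tvar_neq0 xvar_sub_tvar_neq0. Qed.

Lemma cst_coef_div_exp (u : k) (s c : kt k) (y : kxt k) i :
  cst (kt_const u * s ^+ i * c) / y ^+ i = cst c * (kxt_const u / (y / cst s) ^+ i).
Proof. exact: rmorph_div_exp cst_rmorph (kt_const u) s c y i. Qed.

Lemma cst_coef_div_exp_sub (s : kt k) (u : k) (c : kt k) (y : kxt k) j : s != 0 ->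
  cst (kt_const u * (- s) ^+ j * c) / (y - cst s) ^+ j
  = cst c * (kxt_const u / (1 - y / cst s) ^+ j).
Proof. exact: rmorph_div_exp_sub cst_rmorph s (kt_const u) c y j. Qed.

Definition Gcoef (P : {poly k}) (d : nat) (s c : kt k) (i : nat) : kt k :=
  kt_const P`_(d - i) * s ^+ i * c.

Lemma Gcoef_neq0 (P : {poly k}) d s c i :
  P`_(d - i) != 0 -> s != 0 -> c != 0 -> Gcoef P d s c i != 0.
Proof.
move=> P_neq0 s_neq0 c_neq0; apply: mulf_neq0 c_neq0.
rewrite /Gcoef; apply: mulf_neq0; last exact: expf_neq0 _ s_neq0.
by rewrite fmorph_eq0.
Qed.

Lemma Gform_partial_fractions m n q (U W : {poly k}) (c : kt k) :
    (size U <= (m + q).+1)%N -> take_poly q.+1 U = 1 -> (size W <= n)%N ->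
  Gform m.+1 n.+1 (m + q).+1 (Gcoef U (m + q).+1 (tvar k) c)
    (Gcoef U (m + q).+1 (tvar k) c (m + q).+1) (Gcoef W n (- tvar k) c)
  = cst c * ((map_poly kxt_const U).[x / t] / (x / t) ^+ (m + q).+1
             + (map_poly kxt_const W).[1 - x / t] / (1 - x / t) ^+ n).
Proof.
move=> size_U take_U size_W.
have U_low l : (0 < l <= q)%N -> (map_poly kxt_const U)`_l = 0.
  move=> /andP[l_gt0 l_le]; have := congr1 (fun P : {poly k} => P`_l) take_U.
  rewrite /= coef_map coef_take_poly ltnS l_le coef1 eqn0Ngt l_gt0 => ->.
  exact: rmorph0.
have size_mU : (size (map_poly kxt_const U) <= (m + q).+1)%N by rewrite size_map_poly.
have size_mW : (size (map_poly kxt_const W) <= n)%N by rewrite size_map_poly.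
rewrite [in RHS](horner_div_exp_split size_mU U_low size_mW xvar_div_tvar_neq0
  one_sub_xvar_div_neq0).
rewrite !mulrDr !mulr_sumr /Gform.
apply: (congr2 +%R); first apply: (congr2 +%R).
- by apply: eq_bigr => i _; rewrite coef_map; apply: cst_coef_div_exp.
- by rewrite coef_map /Gcoef subnn; apply: cst_coef_div_exp.
- by apply: eq_bigr => j _; rewrite coef_map; apply: cst_coef_div_exp_sub tvar_neq0.
Qed.

Definition homog (d : nat) (P : {poly k}) : {poly {poly k}} :=
  \sum_(l < d.+1) ((P`_l)%:P * 'X^(d - l))%:P * 'X^l.

Lemma embxt_Xn_mul_subX d n : embxt ('X^d * ('X%:P - 'X) ^+ n) = x ^+ d * (t - x) ^+ n.
Proof.
rewrite /embxt rmorphM !rmorphXn rmorphB /= map_polyX map_polyC /=.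
by rewrite rmorphM !rmorphXn rmorphB.
Qed.

Lemma embxt_homog d (P : {poly k}) : (size P <= d.+1)%N ->
  embxt (homog d P) = t ^+ d * (map_poly kxt_const P).[x / t].
Proof.
move=> size_P.
have size_mP : (size (map_poly kxt_const P) <= d.+1)%N by rewrite size_map_poly.
rewrite (horner_coef_wide _ size_mP) mulr_sumr /embxt /homog !rmorph_sum.
apply: eq_bigr => l _; rewrite coef_map /=.
rewrite rmorphM rmorphXn /= map_polyC map_polyX /= rmorphM rmorphXn /= !rmorphM !rmorphXn /=.
exact: mulr_exp_div_exp cst_tvar_neq0 (leq_ord l).
Qed.

Lemma Gform_mul_denominator m n q (N U V : {poly k}) :
    N = U * (1 - 'X) ^+ n + 'X^((m + q).+1) * V -> (size N <= q.+1)%N ->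
    (size U <= (m + q).+1)%N -> take_poly q.+1 U = 1 -> (size V <= n)%N ->
  let c := (tvar k ^+ (m + n).+1)^-1 in
  Gform m.+1 n.+1 (m + q).+1 (Gcoef U (m + q).+1 (tvar k) c)
    (Gcoef U (m + q).+1 (tvar k) c (m + q).+1) (Gcoef (V \Po (1 - 'X)) n (- tvar k) c)
  * embxt ('X^((m + q).+1) * ('X%:P - 'X) ^+ n) = embxt (homog q N).
Proof.
move=> eq_N size_N size_U take_U size_V c.
have size_W : (size (V \Po (1 - 'X)) <= n)%N.
  by rewrite size_comp_poly2 // -opprB size_polyN -polyC1 size_XsubC.
have ct : cst c * t ^+ (m + n).+1 = 1.
  by rewrite cst_rmorphE fmorphV rmorphXn mulVf // expf_neq0 // cst_tvar_neq0.
rewrite (Gform_partial_fractions c size_U take_U size_W).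
rewrite embxt_Xn_mul_subX (embxt_homog size_N) eq_N.
apply: partial_fractions_clear_denominators xvar_neq0 cst_tvar_neq0
  xvar_sub_tvar_neq0 ct _.
lia.
Qed.

End RationalFunctions.

Section Specialization.
Variable k : fieldType.

Lemma spec0E (P : {poly {poly k}}) : spec0 P = map_poly (horner_eval 0) P.
Proof. by []. Qed.

Lemma spec0_Xn_mul_subX d n :
  spec0 ('X^d * ('X%:P - 'X) ^+ n) = 'X^d * (- 'X) ^+ n :> {poly k}.
Proof.
rewrite spec0E rmorphM !rmorphXn rmorphB /= map_polyX map_polyC /= horner_evalE.
by rewrite hornerX sub0r.
Qed.

Lemma spec0_homog d (P : {poly k}) : spec0 (homog d P) = (P`_d)%:P * 'X^d.
Proof.
rewrite spec0E rmorph_sum big_ord_recr /= big1 ?add0r => [|l _];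
  rewrite rmorphM /= map_polyC map_polyXn /= horner_evalE hornerM hornerC hornerXn.
  by rewrite subnn mulr1.
by rewrite expr0n subn_eq0 leqNgt ltn_ord mulr0 mul0r.
Qed.

Lemma specializes_single_pole (G : kxt k) (N : {poly k}) d n q e : (d + n = e + q)%N ->
    G * embxt ('X^d * ('X%:P - 'X) ^+ n) = embxt (homog q N) ->
  specializes_to G ((((-1) ^+ n * N`_q)%:P)%:F / ('X%:F) ^+ e).
Proof.
move=> eq_exp eq_G; exists (homog q N), ('X^d * ('X%:P - 'X) ^+ n).
rewrite spec0_Xn_mul_subX spec0_homog; split => //.
  by rewrite mulf_neq0 ?expf_neq0 ?oppr_eq0 ?polyX_eq0.
apply: rmorph_div_exp_eq; first by rewrite tofrac_eq0 polyX_eq0.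
have sign2 : (-1) ^+ n * (-1) ^+ n = 1 :> {poly k} by rewrite -exprMn mulrNN mulr1 expr1n.
have Xexp : 'X^d * 'X^n = 'X^q * 'X^e :> {poly k} by rewrite -!exprD eq_exp addnC.
rewrite [(- 'X) ^+ n]exprNn polyCM rmorph_sign.
transitivity ((-1) ^+ n * (-1) ^+ n * (N`_q)%:P * ('X^d * 'X^n) : {poly k}); first by ring.
by rewrite sign2 mul1r Xexp; ring.
Qed.

End Specialization.

Theorem exists_Gform_single_pole (k : fieldType) (m n q : nat) : (0 < m)%N -> (0 < n)%N ->
    'C(n, q)%:R != 0 :> k -> 'C(n, q.+1)%:R != 0 :> k -> 'C(n.-1, q)%:R != 0 :> k ->
  exists a apw b, [/\ apw != 0, a m != 0, b n != 0 &
    exists2 c : k, c != 0 &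
      specializes_to (Gform m.+1 n.+1 (m + q).+1 a apw b) ((c%:P)%:F / ('X%:F) ^+ (m + n).+1)].
Proof.
move=> m_gt0 n_gt0 Cq_neq0 Cq1_neq0 Cn1_neq0.
have [U [V [eq_N size_U size_V take_U U_q1]]] := trunc_1subX_exp_decomposition k n q m_gt0.
set N := take_poly q.+1 _ in eq_N; set W := V \Po (1 - 'X).
set c := (tvar k ^+ (m + n).+1)^-1.
have c_neq0 : c != 0 by rewrite invr_eq0; exact: expf_neq0 _ (tvar_neq0 k).
have U0 : U`_0 = 1.
  by have := congr1 (fun P : {poly k} => P`_0) take_U; rewrite /= coef_take_poly coef1.
have W0 : W`_0 = (-1) ^+ q * 'C(n.-1, q)%:R.
  rewrite -horner_coef0 horner_comp !hornerE subr0 -(horner1_take_1subX_exp k q n_gt0) -/N eq_N.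
  by rewrite !hornerE subrr expr0n gtn_eqF // mulr0 add0r expr1n mul1r.
have Nq : N`_q = (-1) ^+ q * 'C(n, q)%:R by rewrite coef_take_poly ltnSn coef_1subX_exp.
exists (Gcoef U (m + q).+1 (tvar k) c), (Gcoef U (m + q).+1 (tvar k) c (m + q).+1),
  (Gcoef W n (- tvar k) c); split.
- by apply: Gcoef_neq0 _ (tvar_neq0 k) c_neq0; rewrite subnn U0 oner_neq0.
- apply: Gcoef_neq0 _ (tvar_neq0 k) c_neq0.
  by rewrite (_ : _ - m = q.+1)%N ?U_q1 ?coef_1subX_exp ?oppr_eq0 ?mulf_neq0 ?signr_eq0 //; lia.
- apply: Gcoef_neq0 _ _ c_neq0; last by rewrite oppr_eq0; exact: tvar_neq0.
  by rewrite subnn W0 mulf_neq0 ?signr_eq0.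
exists ((-1) ^+ n * N`_q); first by rewrite Nq !mulf_neq0 ?signr_eq0.
have eq_G := Gform_mul_denominator eq_N (size_take_poly _ _) size_U take_U size_V.
by apply: specializes_single_pole eq_G; lia.
Qed.

Theorem proposition5p5 (k : closedFieldType) (p : nat) (hp : p \in [pchar k])
  (e1 e2 e : nat) (he2 : (0 < e2)%N) (he21 : (e2 <= e1)%N) (he : e = (e1 + e2)%N)
  (hdiv : ~~ (p %| (e - 1) * (e1 - 1) * (e2 - 1))%N)
  (pw : nat) (hpw1 : (p %| pw)%N) (hpw2 : (e1 <= pw)%N)
  (hpw3 : forall m : nat, (p %| m)%N -> (e1 <= m)%N -> (pw <= m)%N)
  (hfloor : ((e1 - 1) %/ p + (e2 - 1) %/ p < (e - 1) %/ p)%N) :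
  exists (a : nat -> kt k) (apw : kt k) (b : nat -> kt k),
    [/\ apw != 0, a (e1 - 1)%N != 0, b (e2 - 1)%N != 0 &
      exists h : kx k,
        specializes_to (Gform e1 e2 pw a apw b) h /\
        exists f : {poly k},
          [/\ f.[0] != 0, (size f <= e)%N &
              h = (f%:F : kx k) / (('X : {poly k})%:F : kx k) ^+ (e - 1)]].
Proof.
have p_pr := pcharf_prime hp.
(* p does not divide (e1 - 1) (e2 - 1) is implied by hfloor and not needed. *)
have ndvd_e : ~~ (p %| e - 1)%N.
  by move: hdiv; rewrite !Euclid_dvdM // !negb_or => /andP[/andP[]].
have [m em] : exists m, e1 = m.+1 by exists e1.-1; rewrite prednK // (leq_trans he2 he21).
have [n en] : exists n, e2 = n.+1 by exists e2.-1; rewrite prednK.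
subst e e1 e2; have e_pred : (m.+1 + n.+1 - 1 = (m + n).+1)%N by rewrite subn1 addSn addnS.
rewrite e_pred !subn1 /= in ndvd_e hfloor *.
have [q [m_gt0 -> lt_q]] := least_multiple_excess p_pr ndvd_e hfloor hpw1 hpw2 hpw3.
have binom_neq0 j c : ~~ (p %| 'C(j, c))%N -> 'C(j, c)%:R != 0 :> k.
  by rewrite (dvdn_pcharf hp).
have [||||a [apw [b [apw_neq0 a_neq0 b_neq0 [c c_neq0 spec]]]]] :=
  @exists_Gform_single_pole k m n q m_gt0.
- exact: leq_trans (leq_trans (ltn0Sn q) lt_q) (leq_mod n p).
- exact/binom_neq0/prime_ndvd_binomial/ltnW.
- exact/binom_neq0/prime_ndvd_binomial.
- exact/binom_neq0/prime_ndvd_binomial_pred.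
exists a, apw, b; split; [exact: apw_neq0 | exact: a_neq0 | exact: b_neq0 |].
exists ((c%:P)%:F / ('X%:F) ^+ (m + n).+1); split; first exact: spec.
exists c%:P; split; [by rewrite hornerC | by rewrite (leq_trans (size_polyC_leq1 c)) | by []].
Qed.
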